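(* For every level $j\in\{2,\dots,K\}$ and every $z\in[0,1]$, the marginal generating function of the number of waiting level-$j$ clients under $P$ satisfies $$\sum_{\mathbf n\in\mathbb N_0^K}P(\mathbf n)\,z^{n_j}=\frac{1-\sigma_j}{\eta_+(z)-\sigma_j}=\frac{1-\sigma_j}{r_j}\cdot\frac{\sigma_j-\eta_-(z)}{1-\sigma_j z}=\frac{1-\sigma_j}{1-\sigma_j z}\cdot\frac{1-z\,\eta_-(z)}{1-\eta_-(z)},$$ where $\eta_\pm(z)=\tfrac12\big[1+\sigma_j-r_jz\pm\sqrt{(1+\sigma_j-r_jz)^2-4\sigma_{j-1}}\big]$. That is, the level-$j$ marginal coincides with the low-priority marginal of a two-level problem with high-level intensity $\sigma_{j-1}$ and low-level intensity $r_j$ (levels below $j$ discarded).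
   Context: Fix integers $c\ge 1$, $K\ge 2$ and reals $r_1,\dots,r_K>0$ with $r=\sum_{k=1}^K r_k<1$ (here $r_k=\lambda_k/(c\mu)$ for an M/M/$c$ queue with $K$ non-preemptive priority levels, level 1 the highest). Write $\sigma_k=\sum_{j=1}^k r_j$, $\mathbf e_\kappa$ for the standard unit vectors of $\mathbb Z^K$, $\delta_{ij}$ for the Kronecker delta. Consider the equations for $(p_{\mathbf n})_{\mathbf n\in\mathbb N_0^K}$, with the convention $p_{\mathbf n}=0$ if some component of $\mathbf n$ is negative: $$(1+r)p_{\mathbf n}=\Big(\prod_{j=1}^K\delta_{0n_j}\Big)p_{\mathbf n}+\sum_{\kappa=1}^K\Big[r_\kappa p_{\mathbf n-\mathbf e_\kappa}+\Big(\prod_{j=1}^{\kappa-1}\delta_{0n_j}\Big)p_{\mathbf n+\mathbf e_\kappa}\Big],\quad \mathbf n\in\mathbb N_0^K .$$ These are the stationary balance equations for the states in which all $c$ servers are busy and $n_\kappa$ clients of level $\kappa$ wait in the queue; their nonnegative summable solutions form a one-dimensional cone, and $P$ denotes the unique solution with $\sum_{\mathbf n}P(\mathbf n)=1$. *)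

From HB Require Import structures.
From mathcomp Require Import all_boot all_order all_algebra.
From mathcomp Require Import all_classical all_reals all_analysis.
Set Implicit Arguments. Unset Strict Implicit. Unset Printing Implicit Defensive.
Import Order.TTheory GRing.Theory Num.Theory.
Local Open Scope ring_scope.

(* Level k (1-based in the paper) is the ordinal index k-1 : 'I_K.
   A state n in N_0^K is a finite function {ffun 'I_K -> nat}. *)

Definition incr {K : nat} (n : {ffun 'I_K -> nat}) (k : 'I_K) : {ffun 'I_K -> nat} :=
  [ffun i => if i == k then (n i).+1 else n i].

(* n - e_k (only used when n k > 0) *)
Definition decr {K : nat} (n : {ffun 'I_K -> nat}) (k : 'I_K) : {ffun 'I_K -> nat} :=
  [ffun i => if i == k then (n i).-1 else n i].

(* p_{n - e_k}, with the convention p = 0 if a component is negative *)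
Definition p_minus {R : numDomainType} {K : nat} (p : {ffun 'I_K -> nat} -> R)
  (n : {ffun 'I_K -> nat}) (k : 'I_K) : R :=
  if n k == 0%N then 0 else p (decr n k).

Definition rtot {R : numDomainType} {K : nat} (r : 'I_K -> R) : R := \sum_(k < K) r k.

(* sigma(m) = r_1 + ... + r_m  (sum of the first m levels) *)
Definition sigma {R : numDomainType} {K : nat} (r : 'I_K -> R) (m : nat) : R :=
  \sum_(k < K | (k < m)%N) r k.

Definition balance_eq {R : numDomainType} {K : nat} (r : 'I_K -> R)
  (p : {ffun 'I_K -> nat} -> R) (n : {ffun 'I_K -> nat}) : Prop :=
  (1 + rtot r) * p n =
    (if [forall j, n j == 0%N] then p n else 0)
    + \sum_(k < K) ( r k * p_minus p n k
                     + (if [forall j : 'I_K, (j < k)%N ==> (n j == 0%N)]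
                        then p (incr n k) else 0) ).

(* eta_{+/-}(z) for level j (1-based), i.e. sigma_j = sigma r j, sigma_{j-1} = sigma r (j-1) *)
Definition eta_plus {R : rcfType} (sj sjm1 rj z : R) : R :=
  (1 + sj - rj * z + Num.sqrt ((1 + sj - rj * z) ^+ 2 - 4 * sjm1)) / 2.
Definition eta_minus {R : rcfType} (sj sjm1 rj z : R) : R :=
  (1 + sj - rj * z - Num.sqrt ((1 + sj - rj * z) ^+ 2 - 4 * sjm1)) / 2.

(* Testing the balance equations against a bounded weight w shows that p is
   invariant for the uniformised chain: a level-k arrival at rate r_k, and at
   rate 1 a service completion, which removes one client of the highest
   priority level present.  Let F_a(z) be the part of G(z) = E[z^{n_j}]
   carried by the states with exactly a waiting clients of higher priority
   than j.  The weight [a+1 higher clients] z^{n_j} turns the balance into a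
   second-order recurrence for F whose characteristic roots are eta_+ >= 1
   and eta_- in [0, sigma_{j-1}]; since F is summable, F_a = F_0 eta_-^a,
   hence G (1 - eta_-) = F_0.  The weight [n_j <= b] gives the flow identity
   r_j P(n_j = b) = P(no higher client, n_j = b + 1), hence
   F_0 = q_0 + r_j z G with q_0 = P(no higher client, n_j = 0).  At z = 1 this
   gives q_0 = 1 - sigma_j, and eliminating F_0 leaves
   G (eta_+ - sigma_j) = 1 - sigma_j. *)

From HB Require Import structures.
From mathcomp Require Import all_boot all_order all_algebra.
From mathcomp Require Import all_classical all_reals all_analysis.
From mathcomp Require Import lra ring.
Import Order.TTheory GRing.Theory Num.Theory.
Local Open Scope ring_scope.
Set Implicit Arguments. Unset Strict Implicit. Unset Printing Implicit Defensive.

Section NonnegativeSums.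
Variables (R : realType) (T : choiceType).
Implicit Types f g : T -> R.

Definition tsum f : \bar R := \esum_(x in [set: T]) (f x)%:E.

Lemma tsum_ge0 f : (forall x, 0 <= f x) -> (0 <= tsum f)%E.
Proof. by move=> f0; apply: esum_ge0 => x _; rewrite lee_fin. Qed.

Lemma eq_tsum f g : f =1 g -> tsum f = tsum g.
Proof. by move=> fg; apply: eq_esum => x _; rewrite fg. Qed.

Lemma le_tsum f g : (forall x, f x <= g x) -> (tsum f <= tsum g)%E.
Proof. by move=> fg; apply: le_esum => x _; rewrite lee_fin. Qed.

Lemma tsumD f g : (forall x, 0 <= f x) -> (forall x, 0 <= g x) ->
  tsum (fun x => f x + g x) = (tsum f + tsum g)%E.
Proof.
move=> f0 g0; rewrite /tsum -esumD => [|x _|x _]; [|by rewrite lee_fin..].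
by apply: eq_esum => x _; rewrite EFinD.
Qed.

Lemma tsumZ c f : 0 <= c -> (forall x, 0 <= f x) ->
  tsum (fun x => c * f x) = (c%:E * tsum f)%E.
Proof.
move=> c0 f0; rewrite /tsum /esum -ereal_supZl //; last first.
  by apply/set0P; exists 0%E, set0; rewrite ?fsbig_set0.
rewrite image_comp; congr ereal_sup; apply: eq_imagel => A _ /=.
rewrite ge0_mule_fsumr => [|x]; last by rewrite lee_fin.
by apply: eq_fsbigr => x _; rewrite EFinM.
Qed.

Lemma tsum_sum (I : choiceType) (s : seq I) (P : pred I) (F : I -> T -> R) :
  (forall i x, 0 <= F i x) ->
  tsum (fun x => \sum_(i <- s | P i) F i x) = (\sum_(i <- s | P i) tsum (F i))%E.
Proof.
move=> F0; rewrite /tsum -esum_sum => [|x i _ _]; last by rewrite lee_fin.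
by apply: eq_esum => x _; rewrite sumEFin.
Qed.

Lemma tsum_partition (g : T -> nat) f : (forall x, 0 <= f x) ->
  tsum f = (\sum_(b <oo) tsum (fun x => ((g x == b)%:R * f x)%R))%E.
Proof.
move=> f0; have -> : tsum f =
    \esum_(x in \bigcup_(b in [set: nat]) [set x | g x = b]%classic) (f x)%:E.
  by congr esum; apply/seteqP; split => x // _; exists (g x).
rewrite esum_bigcupT; last 2 first.
- by move=> b b' _ _ [x [/= <- <-]].
- by move=> x; rewrite lee_fin.
rewrite nneseries_esumT => [|b]; last first.
  by apply: tsum_ge0 => x; case: (g x == b); rewrite ?mul1r ?mul0r.
apply: eq_esum => b _; rewrite esum_mkcond; apply: eq_esum => x _.
case: (eqVneq (g x) b) => gb; first by rewrite mem_set ?gb ?eqxx ?mul1r.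
by rewrite memNset ?(negPf gb) ?mul0r //=; apply/eqP.
Qed.

End NonnegativeSums.

Definition weight01 (R : numDomainType) (T : Type) (w : T -> R) :=
  forall x, 0 <= w x <= 1.

Lemma weight01_indicator {R : numDomainType} {T : Type} (P : pred T) :
  weight01 (fun x => (P x)%:R : R).
Proof. by move=> x; case: (P x); rewrite ?lexx ?ler01. Qed.

Lemma weight01M (R : numDomainType) (T : Type) (v w : T -> R) :
  weight01 v -> weight01 w -> weight01 (fun x => v x * w x).
Proof.
move=> v01 w01 x; have /andP[v0 v1] := v01 x; have /andP[w0 w1] := w01 x.
by rewrite /= mulr_ge0 // mulr_ile1.
Qed.

Lemma weight01_pow (R : numDomainType) (T : Type) (z : R) (e : T -> nat) :
  0 <= z <= 1 -> weight01 (fun x => z ^+ e x).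
Proof. by case/andP=> z0 z1 x; rewrite exprn_ge0 // exprn_ile1. Qed.

Section Mean.
Variables (R : realType) (T : choiceType) (p : T -> R).
Hypothesis p0 : forall x, 0 <= p x.
Hypothesis p1 : tsum p = 1%E.
Implicit Types v w : T -> R.

Definition mean w : R := fine (tsum (fun x => p x * w x)).

Lemma tsum_mean w : weight01 w -> tsum (fun x => p x * w x) = (mean w)%:E.
Proof.
move=> w01; have pw0 x : 0 <= p x * w x by case/andP: (w01 x) => w0 _; rewrite mulr_ge0.
rewrite fineK // ge0_fin_numE ?tsum_ge0 //; apply: le_lt_trans (ltry 1%R).
rewrite -p1; apply: le_tsum => x /=.
by case/andP: (w01 x) => _ w1; rewrite ler_piMr.
Qed.

Lemma eq_mean v w : v =1 w -> mean v = mean w.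
Proof. by move=> vw; congr fine; apply: eq_tsum => x; rewrite vw. Qed.

Lemma mean_ge0 w : weight01 w -> 0 <= mean w.
Proof.
move=> w01; rewrite -lee_fin -tsum_mean //; apply: tsum_ge0 => x /=.
by case/andP: (w01 x) => w0 _; rewrite mulr_ge0.
Qed.

Lemma mean1 : mean (fun _ => 1) = 1.
Proof. by rewrite /mean (@eq_tsum _ _ _ p) ?p1 // => x /=; rewrite mulr1. Qed.

Lemma meanD v w : weight01 v -> weight01 w -> weight01 (fun x => v x + w x) ->
  mean (fun x => v x + w x) = mean v + mean w.
Proof.
move=> v01 w01 vw01; apply: EFin_inj; rewrite EFinD -!tsum_mean //.
rewrite -tsumD => [|x|x] /=; last 2 first.
- by case/andP: (v01 x) => v0 _; rewrite mulr_ge0.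
- by case/andP: (w01 x) => w0 _; rewrite mulr_ge0.
by apply: eq_tsum => x /=; rewrite mulrDr.
Qed.

Lemma meanZ c w : 0 <= c <= 1 -> weight01 w -> mean (fun x => c * w x) = c * mean w.
Proof.
move=> /andP[c0 c1] w01; apply: EFin_inj; rewrite EFinM -!tsum_mean //; last first.
  by apply: weight01M w01 => x; rewrite c0 c1.
rewrite -tsumZ => [|//|x] /=; last by case/andP: (w01 x) => w0 _; rewrite mulr_ge0.
by apply: eq_tsum => x /=; rewrite mulrCA.
Qed.

Lemma mean_indicatorU (P Q : pred T) : (forall x, ~~ (P x && Q x)) ->
  mean (fun x => (P x || Q x)%:R) = mean (fun x => (P x)%:R) + mean (fun x => (Q x)%:R).
Proof.
move=> PQ; have PQE x : ((P x || Q x)%:R : R) = (P x)%:R + (Q x)%:R.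
  by move: (PQ x); case: (P x); case: (Q x); rewrite /= ?add0r ?addr0.
rewrite -meanD; [exact: eq_mean | exact: weight01_indicator..|].
by move=> x; rewrite -PQE; apply: weight01_indicator.
Qed.

Lemma mean_series (g : T -> nat) w : weight01 w ->
  (mean w)%:E = (\sum_(b <oo) (mean (fun x => (g x == b)%:R * w x))%:E)%E.
Proof.
move=> w01; rewrite -tsum_mean // (tsum_partition g) => [|x]; last first.
  by case/andP: (w01 x) => w0 _; rewrite mulr_ge0.
apply/congr_lim/funext => N; apply: eq_bigr => b _.
rewrite -tsum_mean; last by apply: weight01M w01; apply: weight01_indicator.
by apply: eq_tsum => x /=; rewrite mulrCA.
Qed.

End Mean.

Section States.
Variable K : nat.
Local Notation state := {ffun 'I_K -> nat}.
Implicit Types (n m : state) (k i : 'I_K).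

Lemma decr_incr n k : decr (incr n k) k = n.
Proof. by apply/ffunP => i; rewrite !ffunE; case: eqP => // ->. Qed.

Lemma incr_decr n k : n k != 0%N -> incr (decr n k) k = n.
Proof.
by move=> nk; apply/ffunP => i; rewrite !ffunE; case: eqP => // ->; rewrite prednK // lt0n.
Qed.

Definition higher_empty n k := [forall i : 'I_K, (i < k)%N ==> (n i == 0%N)].

Lemma higher_empty_incr n k : higher_empty (incr n k) k = higher_empty n k.
Proof.
apply: eq_forallb => i; rewrite ffunE.
by case: (eqVneq i k) => [->|]; rewrite ?ltnn.
Qed.

Definition served n k := (n k != 0%N) && higher_empty n k.

Lemma served_inj n k k' : served n k -> served n k' -> k = k'.
Proof.
move=> /andP[nk /forallP hk] /andP[nk' /forallP hk']; apply/val_inj.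
case: (ltngtP k k') => // [kk'|k'k].
- by have /implyP/(_ kk') := hk' k; rewrite (negPf nk).
- by have /implyP/(_ k'k) := hk k'; rewrite (negPf nk').
Qed.

Lemma served_exists n : ~~ [forall i, n i == 0%N] -> exists k, served n k.
Proof.
rewrite negb_forall => /existsP[i0 ni0].
case: (@arg_minnP _ i0 (fun i => n i != 0%N) val ni0) => k nk kmin.
exists k; rewrite /served nk; apply/forallP => i; apply/implyP => ik.
by apply: contraTT ik => ni; rewrite -leqNgt kmin.
Qed.

Definition serve n := if [pick k | served n k] is Some k then decr n k else n.

Variant serve_spec n : state -> Prop :=
  | ServeIdle of [forall i, n i == 0%N] : serve_spec n n
  | ServeLevel k of served n k : serve_spec n (decr n k).

Lemma serveP n : serve_spec n (serve n).
Proof.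
rewrite /serve; case: pickP => [k nk|none]; first exact: ServeLevel.
apply: ServeIdle; apply: contraT => /served_exists[k].
by rewrite none.
Qed.

Lemma sum_served_serve (V : nmodType) (w : state -> V) n :
  (if [forall i, n i == 0%N] then w n else 0)
    + \sum_(k < K) (if served n k then w (decr n k) else 0) = w (serve n).
Proof.
case: serveP => [n0|k nk].
- rewrite n0 big1 ?addr0 // => k _.
  by move/forallP: n0 => /(_ k) n0; rewrite /served n0.
- have -> : [forall i, n i == 0%N] = false.
    by apply: contraTF nk => /forallP n0; rewrite /served n0.
  rewrite add0r (bigD1 k) //= nk big1 ?addr0 // => k' /negPf k'k.
  by case: ifP => // /(served_inj nk)/eqP; rewrite eq_sym k'k.
Qed.

Section Level.
Variable j : 'I_K.

Definition nhigher n := (\sum_(i < K | (i < j)%N) n i)%N.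

Lemma nhigher_incr n k : nhigher (incr n k) = (nhigher n + (k < j))%N.
Proof.
rewrite /nhigher (eq_bigr (fun i => n i + (i == k))%N) => [|i _]; last first.
  by rewrite ffunE; case: (i == k); rewrite ?addn1 ?addn0.
rewrite big_split /=; congr (_ + _)%N; case: (ltnP k j) => kj.
  by rewrite (bigD1 k) //= eqxx big1 // => i /andP[_ /negPf ->].
by rewrite big1 // => i; case: (eqVneq i k) => // ->; rewrite ltnNge kj.
Qed.

Lemma served_nhigher n k : served n k -> (j <= k)%N -> nhigher n = 0%N.
Proof.
move=> /andP[_ /forallP hk] jk; rewrite /nhigher big1 // => i ij.
by apply/eqP; apply: (implyP (hk i)); apply: leq_trans jk.
Qed.

Lemma nhigher_serve n : nhigher (serve n) = (nhigher n).-1.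
Proof.
case: serveP => [/forallP n0|k nk].
  by rewrite /nhigher big1 // => i _; apply/eqP.
have nk0 : n k != 0%N by case/andP: nk.
have e := nhigher_incr (decr n k) k; rewrite incr_decr // in e.
rewrite e; case: (ltnP k j) => kj; first by rewrite addn1.
by rewrite ltnNge kj addn0 in e *; rewrite -e (served_nhigher nk kj).
Qed.

Lemma serve_at n : serve n j = if nhigher n == 0%N then (n j).-1 else n j.
Proof.
case: serveP => [/forallP n0|k nk]; first by rewrite (eqP (n0 j)) if_same.
have nk0 : n k != 0%N by case/andP: nk.
rewrite ffunE; case: (ltnP k j) => kj.
  have e := nhigher_incr (decr n k) k; rewrite incr_decr // kj addn1 in e.
  by rewrite e /=; case: (eqVneq j k) kj => // ->; rewrite ltnn.
rewrite (served_nhigher nk kj) eqxx; case: (eqVneq j k) => // jk.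
have /andP[_ /forallP/(_ j)/implyP] := nk.
by rewrite ltn_neqAle kj andbT val_eqE jk => /(_ isT)/eqP ->.
Qed.
End Level.
End States.

Section Balance.
Variables (R : realType) (K : nat).
Local Notation state := {ffun 'I_K -> nat}.
Variables (r : 'I_K -> R) (p : state -> R).
Hypothesis r0 : forall k, 0 <= r k.
Hypothesis p0 : forall n, 0 <= p n.
Hypothesis hbal : forall n, balance_eq r p n.
Implicit Types (w : state -> R) (n m : state).

Lemma tsum_incr k (F : state -> state -> R) :
  tsum (fun m => F m (incr m k)) = tsum (fun n => if n k == 0%N then 0 else F (decr n k) n).
Proof.
rewrite /tsum; under eq_esum => m _ do rewrite -[in F m](decr_incr m k).
rewrite -(reindex_esum [set: state] [set n : state | n k != 0%N]%classic
  (fun m => incr m k) (fun n => (F (decr n k) n)%:E)); last first.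
  split => [m _|m m' _ _ /(congr1 (decr^~ k))|n /= nk].
  - by rewrite /= ffunE eqxx.
  - by rewrite !decr_incr.
  - by exists (decr n k); rewrite ?incr_decr.
rewrite esum_mkcond; apply: eq_esum => n _.
by case: (eqVneq (n k) 0%N) => nk; [rewrite memNset //= nk | rewrite mem_set].
Qed.

Lemma tsum_arrivals k w :
  tsum (fun n => p_minus p n k * w n) = tsum (fun m => p m * w (incr m k)).
Proof.
rewrite (tsum_incr k (fun m n => p m * w n)); apply: eq_tsum => n.
by rewrite /p_minus; case: (n k == 0%N); rewrite ?mul0r.
Qed.

Lemma tsum_departures k w :
  tsum (fun n => (if higher_empty n k then p (incr n k) else 0) * w n)
  = tsum (fun m => p m * (if served m k then w (decr m k) else 0)).
Proof.
under eq_tsum => m do rewrite -[in w m](decr_incr m k).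
rewrite (tsum_incr k (fun m n => (if higher_empty m k then p n else 0) * w (decr n k))).
apply: eq_tsum => n; rewrite /served; case: (eqVneq (n k) 0%N) => /= nk; first by rewrite mulr0.
rewrite -higher_empty_incr incr_decr //.
by case: ifP; rewrite ?mul0r ?mulr0 // mulrC.
Qed.

Lemma tsum_serve w : (forall n, 0 <= w n) ->
  (tsum (fun n => (if [forall i, n i == 0%N] then p n else 0) * w n)%R
   + \sum_(k < K) tsum (fun m => p m * (if served m k then w (decr m k) else 0))%R)%E
  = tsum (fun m => p m * w (serve m)).
Proof.
move=> w0; rewrite -tsum_sum => [|k m]; last by rewrite mulr_ge0 //; case: ifP.
rewrite -tsumD => [|n|n]; last 2 first.
- by case: ifP; rewrite ?mul0r // mulr_ge0.
- by apply: sumr_ge0 => k _; rewrite mulr_ge0 //; case: ifP.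
apply: eq_tsum => m; rewrite -big_distrr /= -sum_served_serve mulrDr.
by case: ifP; rewrite ?mul0r ?mulr0.
Qed.

Lemma balance_tsum w : (forall n, 0 <= w n) ->
  ((1 + rtot r)%:E * tsum (fun n => p n * w n)%R
   = \sum_(k < K) (r k)%:E * tsum (fun m => p m * w (incr m k))%R
     + tsum (fun m => p m * w (serve m))%R)%E.
Proof.
move=> w0; have rt0 : 0 <= 1 + rtot r by rewrite addr_ge0 // sumr_ge0.
have pmw0 n k : 0 <= p_minus p n k * w n by rewrite mulr_ge0 // /p_minus; case: ifP.
have dep0 n k : 0 <= (if higher_empty n k then p (incr n k) else 0) * w n.
  by rewrite mulr_ge0 //; case: ifP.
have balance_w n : (1 + rtot r) * (p n * w n) =
    (if [forall i, n i == 0%N] then p n else 0) * w n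
    + \sum_(k < K) (r k * (p_minus p n k * w n)
                    + (if higher_empty n k then p (incr n k) else 0) * w n).
  rewrite mulrA (hbal n) mulrDl big_distrl /=; congr (_ + _).
  by apply: eq_bigr => k _; rewrite mulrDl mulrA.
rewrite -tsumZ // => [|n]; last by rewrite mulr_ge0.
rewrite (eq_tsum balance_w) tsumD => [|n|n]; last 2 first.
- by case: ifP; rewrite ?mul0r // mulr_ge0.
- by apply: sumr_ge0 => k _; exact: addr_ge0 (mulr_ge0 (r0 k) (pmw0 n k)) (dep0 n k).
rewrite tsum_sum => [|k n]; last exact: addr_ge0 (mulr_ge0 (r0 k) (pmw0 n k)) (dep0 n k).
under eq_bigr => k _.
  rewrite tsumD => [|n|n]; [|exact: mulr_ge0 (r0 k) (pmw0 n k)|exact: dep0].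
  rewrite (tsumZ (r0 k) (pmw0^~ k)) tsum_arrivals tsum_departures.
  over.
by rewrite big_split /= addeCA tsum_serve.
Qed.

Hypothesis p1 : tsum p = 1%E.

Lemma balance_mean w : weight01 w ->
  (1 + rtot r) * mean p w
  = \sum_(k < K) r k * mean p (fun m => w (incr m k)) + mean p (fun m => w (serve m)).
Proof.
move=> w01; have w0 n : 0 <= w n by case/andP: (w01 n).
have wS : weight01 (fun m => w (serve m)) by move=> m; exact: w01.
apply: EFin_inj; rewrite EFinD EFinM -sumEFin -!(tsum_mean p0 p1) //.
under eq_bigr => k _.
  rewrite EFinM -(tsum_mean p0 p1 (w := fun m => w (incr m k))); last by move=> m; exact: w01.
  over.
exact: balance_tsum.
Qed.

End Balance.

Lemma summable_recurrence_geometric (R : archiRealFieldType) (u : nat -> R) (l m C : R) :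
  1 <= l -> 0 <= m <= 1 -> (forall a, 0 <= u a) -> (forall N, \sum_(a < N) u a <= C) ->
  (forall a, u a.+2 = (l + m) * u a.+1 - l * m * u a) ->
  forall a, u a.+1 = m * u a.
Proof.
move=> l1 /andP[m0 m1] u0 uC rec.
(* d grows geometrically with ratio l >= 1 but is dominated by the summable
   u a.+1 + u a, so it vanishes. *)
pose d a := u a.+1 - m * u a.
have d_pow a : d a = l ^+ a * d 0.
  elim: a => [|a IH]; first by rewrite mul1r.
  by rewrite exprS -mulrA -IH /d rec; ring.
have d_le a : `|d 0| <= u a.+1 + u a.
  apply: le_trans (_ : `|d a| <= _).
    have la : 1 <= l ^+ a := exprn_ege1 a l1.
    by rewrite (d_pow a) normrM (ger0_norm (le_trans ler01 la)) ler_peMl.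
  have mu0 : 0 <= m * u a by rewrite mulr_ge0.
  have mu1 : m * u a <= u a by rewrite ler_piMl.
  have := u0 a.+1; rewrite ler_norml /d => ua; apply/andP; split; lra.
have sum_d N : N%:R * `|d 0| <= C + C.
  rewrite mulr_natl -[in _ *+ N](card_ord N) -sumr_const.
  apply: le_trans (_ : \sum_(a < N) (u a.+1 + u a) <= _); first exact: ler_sum.
  rewrite big_split /=; apply: lerD; last exact: uC.
  by apply: le_trans (uC N.+1); rewrite big_ord_recl /= lerDr.
have C0 : 0 <= C by apply: le_trans (uC 0%N); rewrite big_ord0.
have d0 : d 0 = 0.
  apply/eqP; rewrite -normr_eq0; apply: contraTT (sum_d (Num.bound ((C + C) / `|d 0|))) => nd0.
  have dpos : 0 < `|d 0| by rewrite lt_def nd0 normr_ge0.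
  by rewrite -ltNge -ltr_pdivrMr // archi_boundP // divr_ge0 ?addr_ge0.
by move=> a; apply/eqP; rewrite -subr_eq0 -/(d a) d_pow d0 mulr0.
Qed.

Lemma nneseries_shift (R : realType) (u v : nat -> R) (c : R) :
  0 <= c -> (forall b, 0 <= v b) -> 0 <= u 0%N -> (forall b, u b.+1 = c * v b) ->
  (\sum_(b <oo) (u b)%:E = (u 0%N)%:E + c%:E * \sum_(b <oo) (v b)%:E)%E.
Proof.
move=> c0 v0 u0 uS.
have u_ge0 b : 0 <= u b by case: b => // b; rewrite uS mulr_ge0.
rewrite nneseries_recl => [|b _|]; rewrite ?lee_fin //; congr (_ + _)%E.
rewrite -nneseries_addn => [|b]; last by rewrite lee_fin.
rewrite -nneseriesZl => [|b _]; last by rewrite lee_fin.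
by apply: eq_eseriesr => b _; rewrite addn1 uS EFinM.
Qed.

Lemma eta_props (R : rcfType) (h l z : R) : 0 <= h -> 0 <= l -> z <= 1 ->
  let ep := eta_plus (h + l) h l z in let em := eta_minus (h + l) h l z in
  [/\ ep + em = 1 + (h + l) - l * z, ep * em = h, 1 <= ep, 0 <= em & em <= h].
Proof.
move=> h0 l0 z1 ep em; rewrite {}/ep {}/em /eta_plus /eta_minus.
have : 1 + h <= 1 + (h + l) - l * z.
  have : 0 <= l * (1 - z) by rewrite mulr_ge0 ?subr_ge0.
  lra.
move: (1 + (h + l) - l * z) => s s1.
have discr : (1 - h) ^+ 2 <= s ^+ 2 - 4 * h.
  have : 0 <= (s - (1 + h)) * (s + (1 + h)) by rewrite mulr_ge0 ?subr_ge0 //; lra.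
  by rewrite !expr2; nra.
have D0 : 0 <= s ^+ 2 - 4 * h by apply: le_trans discr; rewrite sqr_ge0.
move: (Num.sqrt _) (sqrtr_ge0 (s ^+ 2 - 4 * h)) (sqr_sqrtr D0) => D Dge0 DE.
have D1 : `|1 - h| <= D.
  by rewrite -(ler_pXn2r (_ : 0 < 2)%N) ?nnegrE ?normr_ge0 // DE real_normK ?num_real.
have Dh : D <= s.
  rewrite -(ler_pXn2r (_ : 0 < 2)%N) ?nnegrE //; last lra.
  by rewrite DE; lra.
have prod : (s + D) / 2 * ((s - D) / 2) = h.
  by rewrite -[h](_ : (s ^+ 2 - D ^+ 2) / 4 = h); [field | rewrite DE; field].
have ep1 : 1 <= (s + D) / 2.
  have := le_trans (ler_norm _) D1; lra.
split => //; first by field.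
- lra.
- by rewrite -prod ler_peMl //; lra.
Qed.

Lemma eta_minus_at1 (R : rcfType) (h l : R) : h <= 1 -> eta_minus (h + l) h l 1 = h.
Proof.
move=> h1; rewrite /eta_minus.
have -> : (1 + (h + l) - l * 1) ^+ 2 - 4 * h = (1 - h) ^+ 2 by ring.
by rewrite sqrtr_sqr ger0_norm ?subr_ge0 //; field.
Qed.

Section EtaForms.
Variables (R : rcfType) (h l z : R).
Local Notation s := (h + l).
Local Notation ep := (eta_plus (h + l) h l z).
Local Notation em := (eta_minus (h + l) h l z).

Lemma eta_plus_form : 0 <= h -> 0 < l -> s < 1 -> 0 <= z <= 1 ->
  (1 - s) / (ep - s) = (1 - s) / l * ((s - em) / (1 - s * z)).
Proof.
move=> h0 l0 s1 /andP[z0 z1].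
have [Eadd Emul ep1 em0 emh] := eta_props h0 (ltW l0) z1.
have sz : s * z <= s by rewrite ler_piMr //; lra.
have key : (ep - s) * (s - em) = l * (1 - s * z).
  have := congr1 (fun x => s * x) Eadd; rewrite /= => E; nra.
have -> : 1 - s * z = (ep - s) * (s - em) / l by rewrite key mulrAC divff ?mul1r ?gt_eqF.
by field; apply/and3P; split; apply/eqP; lra.
Qed.

Lemma eta_minus_form : 0 <= h -> 0 < l -> s < 1 -> 0 <= z <= 1 ->
  (1 - s) / l * ((s - em) / (1 - s * z))
  = (1 - s) / (1 - s * z) * ((1 - z * em) / (1 - em)).
Proof.
move=> h0 l0 s1 /andP[z0 z1].
have [Eadd Emul ep1 em0 emh] := eta_props h0 (ltW l0) z1.
have sz : s * z <= s by rewrite ler_piMr //; lra.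
have key : (s - em) * (1 - em) = l * (1 - z * em).
  have := congr1 (fun x => em * x) Eadd; rewrite /= => E; nra.
have -> : 1 - z * em = (s - em) * (1 - em) / l by rewrite key mulrAC divff ?mul1r ?gt_eqF.
by field; apply/and3P; split; apply/eqP; lra.
Qed.
End EtaForms.

Section Loads.
Variables (R : numDomainType) (K : nat) (r : 'I_K -> R).

Lemma sigmaS (j : 'I_K) : sigma r j.+1 = sigma r j + r j.
Proof.
rewrite /sigma (bigD1 j) //= addrC; congr (_ + _).
by apply: eq_bigl => k; rewrite ltnS ltn_neqAle andbC.
Qed.

Lemma sum_by_level (j : 'I_K) (A B C : R) :
  \sum_(k < K) r k * (if (k < j)%N then A else if k == j then B else C)
  = sigma r j * A + r j * B + (rtot r - sigma r j.+1) * C.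
Proof.
have -> : rtot r - sigma r j.+1 = \sum_(k < K | (j < k)%N) r k.
  rewrite /rtot (bigID (fun k : 'I_K => (k < j.+1)%N)) /= addrAC subrr add0r.
  by apply: eq_bigl => k; rewrite ltnS -ltnNge.
rewrite (bigID (fun k : 'I_K => (k < j)%N)) /= [X in _ + X](bigD1 j) ?ltnn //= eqxx.
rewrite /sigma !big_distrl /= addrA; congr (_ + _ + _).
- by apply: eq_bigr => k ->.
- apply: eq_big => [k|k /andP[/negPf -> /negPf ->] //].
  by rewrite -leqNgt -val_eqE /= eq_sym andbC -ltn_neqAle.
Qed.

Hypothesis r0 : forall k, 0 <= r k.

Lemma sigma_ge0 m : 0 <= sigma r m.
Proof. exact: sumr_ge0. Qed.

Lemma sigma_le_rtot m : sigma r m <= rtot r.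
Proof.
rewrite /rtot [X in _ <= X](bigID (fun k : 'I_K => (k < m)%N)) /= lerDl.
exact: sumr_ge0.
Qed.

End Loads.

Section LevelMarginal.
Variables (R : realType) (K : nat).
Local Notation state := {ffun 'I_K -> nat}.
Variables (r : 'I_K -> R) (p : state -> R).
Hypothesis r0 : forall k, 0 <= r k.
Hypothesis p0 : forall n, 0 <= p n.
Hypothesis hbal : forall n, balance_eq r p n.
Hypothesis p1 : tsum p = 1%E.
Variable j : 'I_K.
Implicit Types (n m : state) (z : R).

Definition slice_weight z a n : R := (nhigher j n == a)%:R * z ^+ n j.
Definition slice z a := mean p (slice_weight z a).
Definition genfun z := mean p (fun n => z ^+ n j).

Lemma weight01_slice z a : 0 <= z <= 1 -> weight01 (slice_weight z a).
Proof. by move=> z01; apply: weight01M; [apply: weight01_indicator | apply: weight01_pow]. Qed.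

Lemma incr_at n k : incr n k j = (n j + (k == j))%N.
Proof. by rewrite ffunE eq_sym; case: eqP; rewrite ?addn1 ?addn0. Qed.

Lemma slice_weight_incr z a n k : slice_weight z a.+1 (incr n k) =
  if (k < j)%N then slice_weight z a n
  else if k == j then z * slice_weight z a.+1 n else slice_weight z a.+1 n.
Proof.
rewrite /slice_weight nhigher_incr incr_at; case: (ltnP k j) => kj.
  by rewrite addn1 eqSS (_ : k == j = false) ?addn0 //; apply/negbTE; rewrite -val_eqE ltn_eqF.
by rewrite addn0; case: (k == j); rewrite ?addn0 // addn1 exprS mulrCA.
Qed.

Lemma slice_weight_serve z a n : slice_weight z a.+1 (serve n) = slice_weight z a.+2 n.
Proof.
rewrite /slice_weight nhigher_serve serve_at.
by case: (nhigher j n) => [|h] //=; rewrite !mul0r.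
Qed.

Lemma slice_recurrence z a : 0 <= z <= 1 ->
  (1 + sigma r j.+1) * slice z a.+1
  = sigma r j * slice z a + r j * z * slice z a.+1 + slice z a.+2.
Proof.
move=> z01; have := balance_mean r0 p0 hbal p1 (weight01_slice a.+1 z01).
have mean_incr k : mean p (fun m => slice_weight z a.+1 (incr m k)) =
    if (k < j)%N then slice z a else if k == j then z * slice z a.+1 else slice z a.+1.
  rewrite (eq_mean _ (slice_weight_incr z a ^~ k)).
  case: ifP => _; last case: ifP => _; rewrite // meanZ //; exact: weight01_slice.
under eq_bigr => k _ do rewrite mean_incr.
rewrite sum_by_level (eq_mean _ (slice_weight_serve z a)) -/(slice z a.+1) -/(slice z a.+2).
lra.
Qed.

Definition marg b := mean p (fun n => (n j == b)%:R).
Definition marg_front b := mean p (fun n => ((nhigher j n == 0%N) && (n j == b))%:R).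

Lemma serve_at_le n b :
  (serve n j <= b)%N = (n j <= b)%N || (nhigher j n == 0%N) && (n j == b.+1).
Proof.
rewrite serve_at; case: (nhigher j n == 0%N); rewrite ?orbF //=.
by case: (n j) => [|c] //=; rewrite eqSS orbC -leq_eqVlt.
Qed.

Lemma marg_flow b : r j * marg b = marg_front b.+1.
Proof.
have := balance_mean r0 p0 hbal p1 (weight01_indicator (fun n => n j <= b)%N).
set A := mean p _; set A' := mean p (fun n => (n j < b)%:R).
have A_split : A = A' + marg b.
  rewrite -(mean_indicatorU p0 p1) => [|n]; first by apply: eq_mean => n; rewrite orbC -leq_eqVlt.
  by apply/negP => /andP[/ltn_eqF ->].
have mean_incr k : mean p (fun m => (incr m k j <= b)%:R) =
    if (k < j)%N then A else if k == j then A' else A.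
  case: eqP => [->|/eqP kj] /=; rewrite ?ltnn ?if_same; apply: eq_mean => m.
    by rewrite incr_at eqxx addn1.
  by rewrite incr_at (negPf kj) addn0.
have mean_serve : mean p (fun m => (serve m j <= b)%:R) = A + marg_front b.+1.
  rewrite -(mean_indicatorU p0 p1) => [|n]; first by apply: eq_mean => m; rewrite serve_at_le.
  by apply/negP => /andP[le /andP[_ /eqP nj]]; rewrite nj ltnn in le.
under eq_bigr => k _ do rewrite mean_incr.
rewrite sum_by_level mean_serve A_split sigmaS.
lra.
Qed.

Local Notation em z := (eta_minus (sigma r j + r j) (sigma r j) (r j) z).

Lemma genfun_slices z : 0 <= z <= 1 -> (genfun z)%:E = (\sum_(a <oo) (slice z a)%:E)%E.
Proof. by move=> z01; rewrite (mean_series p0 p1 (nhigher j)) //; apply: weight01_pow. Qed.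

Lemma slice_geometric z a : 0 <= z <= 1 -> sigma r j.+1 < 1 ->
  slice z a.+1 = em z * slice z a.
Proof.
move=> z01 hs; have h0 := sigma_ge0 r0 j; have l0 := r0 j.
have [Eadd Emul ep1 em0 emh] := eta_props h0 l0 (proj2 (andP z01)).
apply: (summable_recurrence_geometric
  (l := eta_plus (sigma r j + r j) (sigma r j) (r j) z) (C := genfun z)) => //.
- by rewrite em0 /=; move: hs; rewrite sigmaS; lra.
- by move=> b; apply: mean_ge0 => //; exact: weight01_slice.
- move=> N; rewrite -lee_fin genfun_slices // -sumEFin.
  apply: (le_trans _ (nneseries_lim_ge (m := 0%N) N _)) => [|b _ _]; last first.
    by rewrite lee_fin mean_ge0 //; exact: weight01_slice.
  by rewrite big_mkord.
- move=> b; rewrite Eadd Emul.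
  have := slice_recurrence b z01; rewrite sigmaS; lra.
Qed.

Lemma genfun_slice0 z : 0 <= z <= 1 -> sigma r j.+1 < 1 ->
  genfun z * (1 - em z) = slice z 0.
Proof.
move=> z01 hs; have F0 a : 0 <= slice z a by apply: mean_ge0 => //; exact: weight01_slice.
have em0 : 0 <= em z by case: (eta_props (sigma_ge0 r0 j) (r0 j) (proj2 (andP z01))).
have := genfun_slices z01.
rewrite (nneseries_shift em0 F0 (F0 0%N) (fun a => slice_geometric a z01 hs)) -genfun_slices //.
by rewrite -EFinM -EFinD => -[E]; lra.
Qed.

Lemma mean_pow_series (P : pred state) z : 0 <= z <= 1 ->
  (mean p (fun n => (P n)%:R * z ^+ n j))%:E
  = (\sum_(b <oo) (z ^+ b * mean p (fun n => (P n && (n j == b))%:R))%:E)%E.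
Proof.
move=> z01; rewrite (mean_series p0 p1 (fun n => n j)); last first.
  by apply: weight01M; [apply: weight01_indicator | apply: weight01_pow].
apply: eq_eseriesr => b _; congr EFin.
have zb : 0 <= z ^+ b <= 1 := weight01_pow (fun _ : unit => b) z01 tt.
rewrite -(meanZ p0 p1 zb); last exact: weight01_indicator.
apply: eq_mean => n; case: (eqVneq (n j) b) => [->|_].
  by rewrite andbT mul1r mulrC.
by rewrite andbF mul0r mulr0.
Qed.

Lemma genfun_marg z : 0 <= z <= 1 ->
  (genfun z)%:E = (\sum_(b <oo) (z ^+ b * marg b)%:E)%E.
Proof.
move=> z01; rewrite -(mean_pow_series xpredT z01).
by congr EFin; apply: eq_mean => n; rewrite mul1r.
Qed.

Lemma slice0_decomp z : 0 <= z <= 1 -> slice z 0 = marg_front 0 + r j * z * genfun z.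
Proof.
move=> z01; have /andP[z0 _] := z01.
have q0 b : 0 <= z ^+ b * marg_front b.
  by rewrite mulr_ge0 ?exprn_ge0 ?mean_ge0 //; apply: weight01_indicator.
have Q0 b : 0 <= z ^+ b * marg b.
  by rewrite mulr_ge0 ?exprn_ge0 ?mean_ge0 //; apply: weight01_indicator.
have flow b : z ^+ b.+1 * marg_front b.+1 = r j * z * (z ^+ b * marg b).
  by rewrite -marg_flow exprS; ring.
apply: EFin_inj; rewrite (mean_pow_series (fun n => nhigher j n == 0%N) z01).
rewrite (nneseries_shift _ Q0 (q0 0%N) flow) ?mulr_ge0 // -genfun_marg //.
by rewrite expr0 mul1r EFinD EFinM.
Qed.

Lemma marg_front0 : sigma r j.+1 < 1 -> marg_front 0 = 1 - sigma r j.+1.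
Proof.
move=> hs; have z01 : 0 <= (1 : R) <= 1 by rewrite ler01 lexx.
have G1 : genfun 1 = 1 by rewrite -[RHS](mean1 p1); apply: eq_mean => n; rewrite expr1n.
have h1 : sigma r j <= 1 by move: hs; rewrite sigmaS; have := r0 j; lra.
have := genfun_slice0 z01 hs; have := slice0_decomp z01.
by rewrite G1 eta_minus_at1 // sigmaS; lra.
Qed.

Lemma genfun_closed_form z : 0 <= z <= 1 -> 0 < r j -> sigma r j.+1 < 1 ->
  genfun z = (1 - sigma r j.+1) / (eta_plus (sigma r j.+1) (sigma r j) (r j) z - sigma r j.+1).
Proof.
move=> z01 rj0 hs; have /andP[z0 z1] := z01.
have [Eadd _ ep1 _ _] := eta_props (sigma_ge0 r0 j) (r0 j) z1.
have := genfun_slice0 z01 hs; rewrite slice0_decomp // marg_front0 //.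
rewrite sigmaS in hs *.
move: (genfun z) (eta_plus _ _ _ z) (eta_minus _ _ _ z) Eadd ep1 => G ep em Eadd ep1 E.
have -> : 1 - (sigma r j + r j) = G * (ep - (sigma r j + r j)).
  have := congr1 (fun x => G * x) Eadd; rewrite /= => EG; nra.
by rewrite mulfK //; apply/eqP; lra.
Qed.

End LevelMarginal.

Unset Implicit Arguments.
Set Strict Implicit.

Theorem mainTheorem5 (R : realType) (K : nat) (r : 'I_K -> R)
  (p : {ffun 'I_K -> nat} -> R)
  (hK : (2 <= K)%N)
  (hr : forall k, 0 < r k)
  (hrt : rtot r < 1)
  (hp0 : forall n, 0 <= p n)
  (hbal : forall n, balance_eq r p n)
  (hnorm : (\esum_(n in [set: {ffun 'I_K -> nat}]) (p n)%:E = 1)%E)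
  (j : 'I_K) (hj : (1 <= j)%N) (z : R) (hz0 : 0 <= z) (hz1 : z <= 1) :
  let sj := sigma r j.+1 in
  let sjm1 := sigma r j in
  let rj := r j in
  (\esum_(n in [set: {ffun 'I_K -> nat}]) (p n * z ^+ (n j))%:E
     = ((1 - sj) / (eta_plus sj sjm1 rj z - sj))%:E)%E
  /\ (1 - sj) / (eta_plus sj sjm1 rj z - sj)
     = (1 - sj) / rj * ((sj - eta_minus sj sjm1 rj z) / (1 - sj * z))
  /\ (1 - sj) / rj * ((sj - eta_minus sj sjm1 rj z) / (1 - sj * z))
     = (1 - sj) / (1 - sj * z) * ((1 - z * eta_minus sj sjm1 rj z) / (1 - eta_minus sj sjm1 rj z)).
Proof.
move=> sj sjm1 rj; rewrite {}/sj {}/sjm1 {}/rj.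
have r0 k : 0 <= r k := ltW (hr k).
have hs : sigma r j.+1 < 1 := le_lt_trans (sigma_le_rtot r0 _) hrt.
have z01 : 0 <= z <= 1 by rewrite hz0 hz1.
have h0 := sigma_ge0 r0 j.
split; last split.
- rewrite -(genfun_closed_form r0 hp0 hbal hnorm z01 (hr j) hs).
  exact: (tsum_mean hp0 hnorm (weight01_pow (fun n => n j) z01)).
- by rewrite sigmaS in hs *; apply: eta_plus_form.
- by rewrite sigmaS in hs *; apply: eta_minus_form.
Qed.
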